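(* Let $n\in\mathbb{N}$. Let $\mathcal A$ be any quantum algorithm that, given quantum oracle access to a uniformly random permutation $\varphi$ of $\{0,1\}^{2n}$ and to its inverse $\varphi^{-1}$, makes $T$ queries in total and outputs a pair $(x,y)\in\{0,1\}^n\times\{0,1\}^n$. If $\mathcal A$ succeeds, i.e. outputs $(x,y)$ with $\varphi(x\|0^n)=y\|0^n$, with probability $\epsilon>0$ (over $\varphi$ and the internal randomness and measurements of $\mathcal A$), then $$\epsilon\le\frac{50(T+1)^2}{2^n}.$$
   Context: Quantum oracle access to a function $f:\{0,1\}^m\to\{0,1\}^m$ means that the algorithm may apply, at unit cost per application, the unitary $O_f:|a\rangle|b\rangle\mapsto|a\rangle|b\oplus f(a)\rangle$; each query is either to $O_\varphi$ or to $O_{\varphi^{-1}}$, and the algorithm may perform arbitrary unitaries and measurements between queries. This task is called Double-Sided Zero-Search; a pair $(x,y)$ with $\varphi(x\|0^n)=y\|0^n$ is called a zero pair of $\varphi$. *)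

From HB Require Import structures.
From mathcomp Require Import all_boot all_order all_algebra all_fingroup all_field.
Set Implicit Arguments. Unset Strict Implicit. Unset Printing Implicit Defensive.
Import GRing.Theory Num.Theory.
Local Open Scope ring_scope.

Definition xor_t m (u v : m.-tuple bool) : m.-tuple bool :=
  [tuple xorb (tnth u i) (tnth v i) | i < m].

Definition pad0 n (x : n.-tuple bool) : (n + n).-tuple bool :=
  cat_tuple x (nseq_tuple n false).

(* computational basis of the algorithm's register:
   (oracle-selection qubit c, query register a, answer register b, workspace w) *)
Notation basis n W :=
  (bool * (n + n).-tuple bool * (n + n).-tuple bool * 'I_W.+1)%type.

Definition vec (B : finType) := B -> algC.
Definition op (B : finType) := B -> B -> algC.
Definition apply (B : finType) (U : op B) (v : vec B) : vec B :=
  fun i => \sum_j U i j * v j.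
Definition delta (B : finType) (s0 : B) : vec B := fun t => (t == s0)%:R.
Definition unitary (B : finType) (U : op B) : Prop :=
  forall i k, \sum_j (U j i)^* * U j k = (i == k)%:R.

Definition oracle n W (phi : {perm (n + n).-tuple bool}) : op (basis n W) :=
  fun s t =>
    (t == let: (c, a, b, w) := s in
          (c, a, xor_t b (if c then (phi^-1)%g a else phi a), w))%:R.

Fixpoint run n W (phi : {perm (n + n).-tuple bool}) (U : nat -> op (basis n W))
  (s0 : basis n W) (k : nat) : vec (basis n W) :=
  match k with
  | 0 => apply (U 0%N) (delta s0)
  | k'.+1 => apply (U k) (apply (oracle phi) (run phi U s0 k'))
  end.

Definition zero_pair n (phi : {perm (n + n).-tuple bool})
  (xy : n.-tuple bool * n.-tuple bool) : bool :=
  phi (pad0 xy.1) == pad0 xy.2.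

(* measure in the computational basis, then classical post-processing out *)
Definition success_prob n W (phi : {perm (n + n).-tuple bool})
  (U : nat -> op (basis n W)) (s0 : basis n W)
  (out : basis n W -> n.-tuple bool * n.-tuple bool) (T : nat) : algC :=
  \sum_(s | zero_pair phi (out s)) `|run phi U s0 T s| ^+ 2.

Definition avg_success n W (U : nat -> op (basis n W)) (s0 : basis n W)
  (out : basis n W -> n.-tuple bool * n.-tuple bool) (T : nat) : algC :=
  (#|{perm (n + n).-tuple bool}|%:R)^-1 *
  \sum_(phi : {perm (n + n).-tuple bool}) success_prob phi U s0 out T.

From mathcomp Require Import all_boot all_order all_algebra all_fingroup all_field.
From mathcomp Require Import ring zify.
Import Order.TTheory GRing.Theory Num.Theory.
Local Open Scope ring_scope.
Set Implicit Arguments. Unset Strict Implicit. Unset Printing Implicit Defensive.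

(* For an output z = (x, y) put a = x||0^n and b = y||0^n.  Reprogramming a
   permutation to send a to w is, for each w, a bijection from {phi | phi a = b}
   onto {phi' | phi' a = w}, and phi is recovered from phi' by reprogramming
   back to b, which changes phi' and its inverse at two points only.  By the
   hybrid argument the final states under phi and phi' are at squared distance
   at most 4T times the weight the run under phi' puts on queries to these
   points, so Pr_phi[out = z] <= 2 * distance + 2 * Pr_phi'[out = z].
   Averaging over the 2^(2n) values of w and summing over z, each query is one
   of the distinguished points for at most 2 * 2^n pairs z, which yields
   2^(2n) * eps <= 16 * 2^n * T^2 + 2. *)

Section NormInequalities.
Variable R : numDomainType.

(* [|u + e|^2 <= (1 + 1/k)|u|^2 + (1 + k)|e|^2], multiplied by [k] to stay
   division-free. *)
Lemma normD_sqr_le_weighted (k : nat) (u e : R) :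
  k%:R * `|u + e| ^+ 2 <= k.+1%:R * `|u| ^+ 2 + (k * k.+1)%:R * `|e| ^+ 2.
Proof.
have le_normD_sqr : `|u + e| ^+ 2 <= (`|u| + `|e|) ^+ 2.
  by rewrite lerXn2r ?nnegrE ?addr_ge0 ?ler_normD.
apply: le_trans (ler_wpM2l (ler0n _ k) le_normD_sqr) _.
rewrite -subr_ge0.
have -> : k.+1%:R * `|u| ^+ 2 + (k * k.+1)%:R * `|e| ^+ 2
          - k%:R * (`|u| + `|e|) ^+ 2 = (`|u| - k%:R * `|e|) ^+ 2.
  by rewrite -addn1 natrM natrD; ring.
by rewrite -real_normK ?exprn_ge0 // rpredB ?rpredM ?ger0_real.
Qed.

Lemma normD_sqr_le2 (u e : R) :
  `|u + e| ^+ 2 <= 2%:R * `|u| ^+ 2 + 2%:R * `|e| ^+ 2.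
Proof. by have := normD_sqr_le_weighted 1 u e; rewrite mul1r. Qed.

End NormInequalities.

Lemma ler_sum_cond (R : numDomainType) (I : finType) (P : pred I) (F : I -> R) :
  (forall i, 0 <= F i) -> \sum_(i | P i) F i <= \sum_i F i.
Proof.
by move=> F_ge0; rewrite [leLHS]big_mkcond ler_sum // => i _; case: ifP.
Qed.

Lemma sum_cond_le_weighted (R : numDomainType) (I : finType) (D : pred I)
    (h : I -> nat) (F : I -> R) :
    (forall i, D i <= h i)%N -> (forall i, 0 <= F i) ->
  \sum_(i | D i) F i <= \sum_i (h i)%:R * F i.
Proof.
move=> le_Dh F_ge0; rewrite big_mkcond; apply: ler_sum => i _.
have := le_Dh i; case: (D i) => /= [h_gt0|_]; last by rewrite mulr_ge0.
by rewrite ler_peMl // ler1n.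
Qed.

Section SquaredNorm.
Variable B : finType.
Implicit Types (v u e : vec B) (f g : B -> B).

Definition nrm2 v : algC := \sum_s `|v s| ^+ 2.

Lemma eq_nrm2 u v : u =1 v -> nrm2 u = nrm2 v.
Proof. by move=> eq_uv; apply: eq_bigr => s _; rewrite eq_uv. Qed.

Lemma nrm2_delta s0 : nrm2 (delta s0) = 1.
Proof.
rewrite /nrm2 (bigD1 s0) //= /delta eqxx normr1 expr1n big1 ?addr0 //.
by move=> s /negbTE ->; rewrite normr0 expr0n.
Qed.

Lemma nrm2_unitary (U : op B) v : unitary U -> nrm2 (apply U v) = nrm2 v.
Proof.
move=> unitU; rewrite /nrm2 /apply.
under eq_bigr => i _ do rewrite normCK rmorph_sum mulr_suml.
under eq_bigr => i _ do under eq_bigr => j _ do rewrite mulr_sumr.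
rewrite exchange_big /=; apply: eq_bigr => j _.
rewrite exchange_big /= (bigD1 j) //= addrC big1 ?add0r; last first.
  move=> k /negbTE nkj.
  transitivity (v j * (v k)^* * \sum_i (U i k)^* * U i j).
    by rewrite mulr_sumr; apply: eq_bigr => i _; rewrite rmorphM /=; ring.
  by rewrite unitU nkj mulr0.
transitivity (v j * (v j)^* * \sum_i (U i j)^* * U i j).
  by rewrite mulr_sumr; apply: eq_bigr => i _; rewrite rmorphM /=; ring.
by rewrite unitU eqxx mulr1 normCK.
Qed.

Lemma applyB (U : op B) u v s :
  apply U (fun t => u t - v t) s = apply U u s - apply U v s.
Proof. by rewrite /apply -sumrB; apply: eq_bigr => t _; rewrite mulrBr. Qed.

Lemma sum_sqr_comp_inj f (P : pred B) v :
  injective f -> (forall s, P (f s) = P s) ->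
  \sum_(s | P s) `|v (f s)| ^+ 2 = \sum_(s | P s) `|v s| ^+ 2.
Proof.
move=> inj_f Pf; rewrite [RHS](reindex_inj inj_f) /=.
by apply: eq_bigl => s; rewrite Pf.
Qed.

Lemma nrm2_comp_inj f v : injective f -> nrm2 (fun s => v (f s)) = nrm2 v.
Proof. by move=> inj_f; rewrite /nrm2 [RHS](reindex_inj inj_f). Qed.

Lemma nrm2_comp_sub f g (D : pred B) v :
    injective f -> injective g -> {in [predC D], f =1 g} ->
    (forall s, D (f s) = D s) -> (forall s, D (g s) = D s) ->
  nrm2 (fun s => v (f s) - v (g s)) <= 4%:R * \sum_(s | D s) `|v s| ^+ 2.
Proof.
move=> inj_f inj_g eq_fg Df Dg.
rewrite /nrm2 (bigID D) /= [X in _ + X]big1 ?addr0 => [|s nDs]; last first.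
  by rewrite eq_fg ?subrr ?normr0 ?expr0n.
apply: le_trans (_ : \sum_(s | D s)
    (2%:R * `|v (f s)| ^+ 2 + 2%:R * `|v (g s)| ^+ 2) <= _).
  by apply: ler_sum => s _; rewrite -(normrN (v (g s))) normD_sqr_le2.
by rewrite big_split /= -!mulr_sumr !sum_sqr_comp_inj // -mulrDl -natrD lexx.
Qed.

Lemma nrm2_addr_weighted (k : nat) u e :
  k%:R * nrm2 (fun s => u s + e s) <= k.+1%:R * nrm2 u + (k * k.+1)%:R * nrm2 e.
Proof.
rewrite /nrm2 !mulr_sumr -big_split /=.
by apply: ler_sum => s _; apply: normD_sqr_le_weighted.
Qed.

Lemma sum_sqr_le_sub (P : pred B) u v :
  \sum_(s | P s) `|u s| ^+ 2 <=
  2%:R * nrm2 (fun s => u s - v s) + 2%:R * \sum_(s | P s) `|v s| ^+ 2.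
Proof.
apply: le_trans (_ : \sum_(s | P s)
    (2%:R * `|u s - v s| ^+ 2 + 2%:R * `|v s| ^+ 2) <= _).
  by apply: ler_sum => s _; rewrite -{1}(subrK (v s) (u s)) normD_sqr_le2.
rewrite big_split /= -!mulr_sumr lerD2r ler_wpM2l //.
by apply: ler_sum_cond => s; rewrite exprn_ge0.
Qed.

End SquaredNorm.

Lemma xor_tK m (b g : m.-tuple bool) : xor_t (xor_t b g) g = b.
Proof.
apply: eq_from_tnth => i; rewrite !tnth_mktuple.
by case: (tnth b i); case: (tnth g i).
Qed.

Section Oracle.
Variables n W : nat.
Local Notation B := (basis n W).
Local Notation tup := ((n + n).-tuple bool).
Implicit Types (phi : {perm tup}) (v : vec B) (s : B).

Definition query phi (c : bool) (a : tup) : tup :=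
  if c then (phi^-1)%g a else phi a.

Definition oracle_fun phi s : B :=
  let: (c, a, b, w) := s in (c, a, xor_t b (query phi c a), w).

Definition query_differs phi phi' s : bool :=
  let: (c, a, _, _) := s in query phi c a != query phi' c a.

Lemma apply_oracle phi v s : apply (oracle phi) v s = v (oracle_fun phi s).
Proof.
rewrite /apply (bigD1 (oracle_fun phi s)) //= /oracle eqxx mul1r big1 ?addr0 //.
by move=> t /negbTE; case: s => [[[c a] b] w] /= ->; rewrite mul0r.
Qed.

Lemma oracle_funK phi : involutive (oracle_fun phi).
Proof. by case=> [[[c a] b] w] /=; rewrite xor_tK. Qed.

Lemma query_differs_oracle_fun phi phi' psi s :
  query_differs phi phi' (oracle_fun psi s) = query_differs phi phi' s.
Proof. by case: s => [[[c a] b] w]. Qed.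

Lemma oracle_fun_eq phi phi' :
  {in [predC query_differs phi phi'], oracle_fun phi =1 oracle_fun phi'}.
Proof. by case=> [[[c a] b] w]; rewrite inE /= negbK => /eqP ->. Qed.

Lemma nrm2_oracle phi v : nrm2 (apply (oracle phi) v) = nrm2 v.
Proof.
rewrite -(nrm2_comp_inj v (inv_inj (oracle_funK phi))).
by apply: eq_nrm2 => s; rewrite apply_oracle.
Qed.

Definition oracle_diff phi phi' v : vec B :=
  fun s => apply (oracle phi) v s - apply (oracle phi') v s.

Lemma nrm2_oracle_diff phi phi' v :
  nrm2 (oracle_diff phi phi' v) <=
  4%:R * \sum_(s | query_differs phi phi' s) `|v s| ^+ 2.
Proof.
rewrite (@eq_nrm2 _ _ (fun s => v (oracle_fun phi s) - v (oracle_fun phi' s))).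
  by apply: nrm2_comp_sub;
    do ?[exact: inv_inj (oracle_funK _) | exact: oracle_fun_eq
        | exact: query_differs_oracle_fun].
by move=> s; rewrite /oracle_diff !apply_oracle.
Qed.

End Oracle.

Section Hybrid.
Variables (n W : nat) (U : nat -> op (basis n W)) (s0 : basis n W) (T : nat).
Hypothesis unitaryU : forall i, (i <= T)%N -> unitary (U i).
Local Notation tup := ((n + n).-tuple bool).
Implicit Types phi : {perm tup}.

Lemma nrm2_run phi t : (t <= T)%N -> nrm2 (run phi U s0 t) = 1.
Proof.
elim: t => [|t IH] le_tT /=; rewrite (nrm2_unitary _ (unitaryU le_tT)).
  exact: nrm2_delta.
by rewrite nrm2_oracle IH // ltnW.
Qed.

Lemma nrm2_run_sub phi phi' t : (t <= T)%N ->
  nrm2 (fun s => run phi U s0 t s - run phi' U s0 t s) <=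
  t%:R * \sum_(i < t) nrm2 (oracle_diff phi phi' (run phi' U s0 i)).
Proof.
set d := fun t s => run phi U s0 t s - run phi' U s0 t s.
set e := fun t => oracle_diff phi phi' (run phi' U s0 t).
have d0 : d 0%N =1 (fun _ => 0) by move=> s; rewrite /d subrr.
have d_succ t' : (t' < T)%N ->
    nrm2 (d t'.+1) = nrm2 (fun s => d t' (oracle_fun phi s) + e t' s).
  move=> lt_tT; rewrite -[RHS](nrm2_unitary _ (unitaryU lt_tT)).
  apply: eq_nrm2 => s; rewrite /d /e /oracle_diff /= -applyB.
  by apply: eq_bigr => r _; rewrite !apply_oracle addrA subrK.
elim: t => [|[|t] IH] le_tT.
- by rewrite mul0r (eq_nrm2 d0) /nrm2 big1 // => s _; rewrite normr0 expr0n.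
- rewrite d_succ // big_ord1 mul1r /nrm2.
  under eq_bigr => s _ do rewrite d0 add0r.
  exact: lexx.
rewrite d_succ // -(ler_pM2l (ltr0Sn _ t)).
apply: le_trans (nrm2_addr_weighted _ _ _) _.
rewrite nrm2_comp_inj; last exact: inv_inj (oracle_funK phi).
rewrite big_ord_recr /=; set E := \sum_(i < t.+1) _.
have IHd : nrm2 (d t.+1) <= t.+1%:R * E := IH (ltnW le_tT).
apply: le_trans (_ : t.+2%:R * (t.+1%:R * E) + (t.+1 * t.+2)%:R * nrm2 (e t.+1)
  <= _); first by rewrite lerD2r ler_wpM2l.
by rewrite natrM mulrCA -mulrA -!mulrDr.
Qed.

End Hybrid.

Lemma sum_eq_inj_le1 (I J : finType) (f : I -> J) (b : J) :
  injective f -> (\sum_x (b == f x) <= 1)%N.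
Proof.
move=> inj_f; case: (pickP (fun x => b == f x)) => [x1 /eqP b_fx1 | none].
  rewrite (bigD1 x1) //= b_fx1 eqxx big1 // => x /negbTE nx.
  by rewrite (inj_eq inj_f) eq_sym nx.
by rewrite big1 // => x _; rewrite none.
Qed.

Lemma sum_pair_eq_inj_le (I J : finType) (f g : I -> J) (b : J) :
  injective f -> injective g ->
  (\sum_x \sum_y ((b == f x) + (b == g y)) <= 2 * #|I|)%N.
Proof.
move=> inj_f inj_g.
rewrite (eq_bigr (fun x => #|I| * (b == f x) + \sum_y (b == g y))%N); last first.
  by move=> x _; rewrite big_split /= sum_nat_const mulnC.
rewrite big_split /= -big_distrr /= sum_nat_const mul2n -addnn.
by rewrite leq_add // -[leqRHS]muln1 leq_mul2l
  (sum_eq_inj_le1 b inj_f, sum_eq_inj_le1 b inj_g) orbT.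
Qed.

Lemma pad0_inj n : injective (@pad0 n).
Proof.
move=> x y /(congr1 val) /= /(congr1 (take n)).
by rewrite !take_size_cat ?size_tuple // => /val_inj.
Qed.

Section Reprogram.
Variable T : finType.
Implicit Types (phi : {perm T}) (a u v : T).

Definition reprogram a u phi : {perm T} := (tperm a ((phi^-1)%g u) * phi)%g.

Lemma reprogram_at a u phi : reprogram a u phi a = u.
Proof. by rewrite permM tpermL permKV. Qed.

Lemma reprogramK a u v phi : phi a = v -> reprogram a v (reprogram a u phi) = phi.
Proof.
move=> phi_a; rewrite /reprogram invMg tpermV permM -phi_a permK tpermL.
by rewrite mulgA tperm2 mul1g.
Qed.

End Reprogram.

Section ZeroSearch.
Variables (n W : nat) (U : nat -> op (basis n W)) (s0 : basis n W).
Variables (out : basis n W -> n.-tuple bool * n.-tuple bool) (T : nat).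
Hypothesis unitaryU : forall i, (i <= T)%N -> unitary (U i).
Local Notation B := (basis n W).
Local Notation tup := ((n + n).-tuple bool).
Local Notation N := #|{: n.-tuple bool}|.
Implicit Types (phi : {perm tup}) (z : n.-tuple bool * n.-tuple bool).

(* [reprogram a y phi'] differs from [phi'] only at [a] and [phi'^-1 y], so a
   query can only tell them apart if it is one of these four points. *)
Definition reprogram_hits (a y : tup) phi' (s : B) : nat :=
  let: (c, q, _, _) := s in
  if c then ((q == phi' a) + (q == y))%N else ((q == a) + (q == (phi'^-1)%g y))%N.

Lemma query_differs_reprogram a y phi' s :
  (query_differs (reprogram a y phi') phi' s <= reprogram_hits a y phi' s)%N.
Proof.
case: s => [[[[] q] b] w] /=; rewrite /query /reprogram.
  case: (boolP ((q == phi' a) || (q == y))) => [hit | /norP[q_a q_y]].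
    by apply: leq_trans (leq_b1 _) _; case/orP: hit => ->; rewrite ?leq_addl.
  rewrite invMg tpermV permM tpermD ?eqxx // 1?eq_sym ?(inj_eq perm_inj) //.
  by apply: contra q_a => /eqP <-; rewrite permKV.
case: (boolP ((q == a) || (q == (phi'^-1)%g y))) => [hit | /norP[q_a q_y]].
  by apply: leq_trans (leq_b1 _) _; case/orP: hit => ->; rewrite ?leq_addl.
by rewrite permM tpermD ?eqxx // eq_sym.
Qed.

Definition prob_out phi z : algC :=
  \sum_(s | out s == z) `|run phi U s0 T s| ^+ 2.

Lemma sum_prob_out phi : \sum_z prob_out phi z = 1.
Proof.
by rewrite -(nrm2_run s0 unitaryU phi (leqnn T)) /nrm2 (partition_big out xpredT).
Qed.

Lemma success_probE phi :
  success_prob phi U s0 out T = \sum_(z | zero_pair phi z) prob_out phi z.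
Proof.
rewrite /success_prob (partition_big out (zero_pair phi)) //=.
apply: eq_bigr => z zp_z; apply: eq_bigl => s.
by case: eqVneq => [->|]; rewrite ?zp_z ?andbF.
Qed.

Definition reprogram_bound phi' z : algC :=
  (8 * T)%:R * \sum_(t < T) \sum_s
     (reprogram_hits (pad0 z.1) (pad0 z.2) phi' s)%:R * `|run phi' U s0 t s| ^+ 2
  + 2%:R * prob_out phi' z.

Lemma prob_out_reprogram phi' z :
  prob_out (reprogram (pad0 z.1) (pad0 z.2) phi') z <= reprogram_bound phi' z.
Proof.
apply: le_trans (sum_sqr_le_sub _ _ (run phi' U s0 T)) _; rewrite lerD2r.
apply: le_trans (ler_wpM2l _ (nrm2_run_sub s0 unitaryU _ _ (leqnn T))) _ => //.
have -> : (8 * T)%:R = 2%:R * (T%:R * 4%:R) :> algC.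
  by rewrite -!natrM mulnCA mulnC.
rewrite -!mulrA !ler_wpM2l // mulr_sumr.
apply: ler_sum => t _; apply: le_trans (nrm2_oracle_diff _ _ _) _.
rewrite ler_wpM2l //; apply: sum_cond_le_weighted => [s|s].
  exact: query_differs_reprogram.
by rewrite exprn_ge0.
Qed.

Lemma sum_zero_pair_le z (w : tup) :
  \sum_(phi | zero_pair phi z) prob_out phi z <=
  \sum_(phi' : {perm tup} | phi' (pad0 z.1) == w) reprogram_bound phi' z.
Proof.
set a := pad0 z.1; set y := pad0 z.2.
rewrite [leRHS](reindex_onto (reprogram a w) (reprogram a y)) /=; last first.
  by move=> phi' /eqP phi'_a; apply: reprogramK.
rewrite [leRHS](eq_bigl (fun phi : {perm tup} => zero_pair phi z)); last first.
  move=> phi; rewrite reprogram_at eqxx /=.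
  apply/eqP/eqP => [<-|phi_a]; first by rewrite reprogram_at.
  exact: reprogramK.
apply: ler_sum => phi /eqP phi_a.
by rewrite -{1}(reprogramK w phi_a); apply: prob_out_reprogram.
Qed.

Lemma sum_reprogram_hits phi' s :
  (\sum_z reprogram_hits (pad0 z.1) (pad0 z.2) phi' s <= 2 * N)%N.
Proof.
rewrite -(pair_bigA _ (fun x y => reprogram_hits (pad0 x) (pad0 y) phi' s)) /=.
have inj_phi'_pad0 : injective (fun x => phi' (pad0 x)).
  by move=> x x' /perm_inj /pad0_inj.
have inj_phi'V_pad0 : injective (fun y => (phi'^-1)%g (pad0 y)).
  by move=> y y' /perm_inj /pad0_inj.
case: s => [[[[] q] b] v].
  exact: sum_pair_eq_inj_le inj_phi'_pad0 (@pad0_inj n).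
exact: sum_pair_eq_inj_le (@pad0_inj n) inj_phi'V_pad0.
Qed.

Lemma sum_reprogram_bound phi' :
  \sum_z reprogram_bound phi' z <= (16 * N * T ^ 2 + 2)%:R.
Proof.
rewrite big_split /= -!mulr_sumr sum_prob_out mulr1 natrD lerD2r exchange_big /=.
apply: le_trans (_ : (8 * T)%:R * \sum_(t < T) (2 * N)%:R <= _); last first.
  by rewrite sumr_const card_ord -[X in _ * X]mulr_natr -!natrM ler_nat; nia.
rewrite ler_wpM2l // ler_sum // => t _; rewrite exchange_big /=.
apply: le_trans (_ : \sum_s (2 * N)%:R * `|run phi' U s0 t s| ^+ 2 <= _).
  rewrite ler_sum // => s _; rewrite -mulr_suml -natr_sum.
  by rewrite ler_wpM2r ?exprn_ge0 // ler_nat sum_reprogram_hits.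
have := nrm2_run s0 unitaryU phi' (ltnW (ltn_ord t)).
by rewrite /nrm2 -mulr_sumr => ->; rewrite mulr1.
Qed.

(* Averaging [sum_zero_pair_le] over all [#|tup|] values of [w]. *)
Lemma sum_success_prob_le :
  #|{: tup}|%:R * \sum_phi success_prob phi U s0 out T <=
  #|{perm tup}|%:R * (16 * N * T ^ 2 + 2)%:R.
Proof.
under eq_bigr => phi _ do rewrite success_probE big_mkcond.
rewrite exchange_big mulr_sumr /=.
apply: le_trans (_ : \sum_z \sum_(phi' : {perm tup}) reprogram_bound phi' z <= _).
  apply: ler_sum => z _; rewrite -big_mkcond.
  rewrite [leRHS](partition_big (fun phi' : {perm tup} => phi' (pad0 z.1))
    xpredT) //=.
  by rewrite mulr_natl -sumr_const ler_sum // => w _; apply: sum_zero_pair_le.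
rewrite exchange_big /= mulr_natl -sumr_const ler_sum // => phi' _.
exact: sum_reprogram_bound.
Qed.

End ZeroSearch.

Theorem theorem4 (n T W : nat) (U : nat -> op (basis n W)) (s0 : basis n W)
  (out : basis n W -> n.-tuple bool * n.-tuple bool) :
  (forall i, (i <= T)%N -> unitary (U i)) ->
  0 < avg_success U s0 out T ->
  avg_success U s0 out T <= 50%:R * (T.+1)%:R ^+ 2 / 2%:R ^+ n.
Proof.
move=> unitaryU _; have := sum_success_prob_le s0 out unitaryU.
rewrite /avg_success !card_tuple card_bool expnD -!natrX.
set S := \sum_phi _; set F := #|_|; set N := (2 ^ n)%N => le_S.
have N_gt0 : (0 < N)%N by rewrite expn_gt0.
have F_gt0 : (0 < F)%N by apply/card_gt0P; exists 1%g.
rewrite ler_pdivlMr ?ltr0n // -mulrA ler_pdivrMl ?ltr0n //.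
rewrite -(ler_pM2l (_ : 0 < (N * N)%:R)) ?ltr0n ?muln_gt0 ?N_gt0 // mulrA.
apply: le_trans (ler_wpM2r (ler0n _ N) le_S) _.
rewrite -mulrA mulrCA -!natrM ler_nat; nia.
Qed.
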